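(* Let $G$ be a finite simple undirected graph, $r<s$ positive integers, and run set-k on $(G,r,s)$. For every positive integer $k$ for which the transition time $t_k$ is defined, the $k$-$(r,s)$-nuclei of $G$ are exactly the sets $\mathcal{L}(C)$, where $C$ ranges over the connected components of the supergraph $\mathcal{G}_{t_k}$ and $\mathcal{L}(C)$ is the set of $K_s$s associated with the links of $C$.
   Context: A $K_r$ is an $r$-clique of $G$. For a set $\mathcal{S}$ of $K_s$s: $K_r(\mathcal{S})$ is the set of $K_r$s contained in some member of $\mathcal{S}$; the $\mathcal{S}$-degree of $R\in K_r(\mathcal{S})$ is the number of $S\in\mathcal{S}$ containing $R$; $R,R'$ are $\mathcal{S}$-connected if there is a sequence $R=R_1,\dots,R_m=R'$ in $K_r(\mathcal{S})$ with each $R_i\cup R_{i+1}$ contained in some $S\in\mathcal{S}$. A $k$-$(r,s)$-nucleus is a set $\mathcal{S}$ of $K_s$s, maximal under inclusion among those such that every $R\in K_r(\mathcal{S})$ has $\mathcal{S}$-degree $\ge k$ and any two members of $K_r(\mathcal{S})$ are $\mathcal{S}$-connected. Procedure set-k$(G,r,s)$: enumerate all $K_r$s and $K_s$s; initialize $\delta(R)$ to the number of $K_s$s containing $R$; all $K_r$s unprocessed. Repeat until all processed: pick an unprocessed $K_r$ $R$ with minimum current $\delta(R)$ (ties arbitrary); set $\kappa(R)=\delta(R)$; for each $K_s$ $S\ni R$ such that no $K_r\subset S$ is processed, and for each $K_r$ $R'\subset S$, $R'\neq R$, with $\delta(R')>\delta(R)$, decrease $\delta(R')$ by 1; mark $R$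 processed. $R_i$ is the $i$-th processed $K_r$; ''time $t$'' is the beginning of the iteration processing $R_t$. The transition time $t_k$ is the unique index with $\kappa(R_{t_k})=k$ and ($t_k=1$ or $\kappa(R_{t_k-1})<k$). $\mathcal{S}_t$ is the set of $K_s$s all of whose $K_r$s are unprocessed at time $t$. The supergraph $\mathcal{G}_t$ is the multigraph with node set $K_r(\mathcal{S}_t)$ in which, for each $S\in\mathcal{S}_t$ and each pair of distinct $K_r$s $R,R'\subset S$, there is a link between $R$ and $R'$ associated with $S$ (so there may be multiple links between two nodes). *)

From mathcomp Require Import all_boot.
Set Implicit Arguments. Unset Strict Implicit. Unset Printing Implicit Defensive.

Section Nuclei.
Variables (T : finType) (e : rel T) (r s : nat).

Definition clique (A : {set T}) : bool :=
  [forall x in A, forall y in A, (x != y) ==> e x y].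

Definition Kr : {set {set T}} := [set A | clique A && (#|A| == r)].
Definition Ks : {set {set T}} := [set A | clique A && (#|A| == s)].

Definition KrOf (SS : {set {set T}}) : {set {set T}} :=
  [set R in Kr | [exists S in SS, R \subset S]].

Definition sdeg (SS : {set {set T}}) (R : {set T}) : nat :=
  #|[set S in SS | R \subset S]|.

Definition sadj (SS : {set {set T}}) : rel {set T} :=
  fun R R' => (R \in KrOf SS) && (R' \in KrOf SS) &&
              [exists S in SS, (R :|: R') \subset S].

Definition sconnected (SS : {set {set T}}) (R R' : {set T}) : bool :=
  connect (sadj SS) R R'.

Definition nucleus_prop (k : nat) (SS : {set {set T}}) : Prop :=
  SS \subset Ks /\
  (forall R, R \in KrOf SS -> k <= sdeg SS R) /\
  (forall R R', R \in KrOf SS -> R' \in KrOf SS -> sconnected SS R R').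

Definition is_nucleus (k : nat) (SS : {set {set T}}) : Prop :=
  nucleus_prop k SS /\
  (forall SS' : {set {set T}}, SS \subset SS' -> nucleus_prop k SS' -> SS' = SS).

Definition upd (d : {set T} -> nat) (x : {set T}) (v : nat) : {set T} -> nat :=
  fun y => if y == x then v else d y.

(* no K_r contained in S is processed (P = list of processed K_r's) *)
Definition unproc_Ks (P : seq {set T}) (S : {set T}) : bool :=
  [forall R0 in Kr, (R0 \subset S) ==> (R0 \notin P)].

Definition step (P : seq {set T}) (d : {set T} -> nat) (R : {set T})
  : {set T} -> nat :=
  foldl (fun (d1 : {set T} -> nat) (S : {set T}) =>
     if (R \subset S) && unproc_Ks P S then
       foldl (fun (d2 : {set T} -> nat) (R' : {set T}) =>
          if (R' \subset S) && (R' != R) && (d2 R < d2 R')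
          then upd d2 R' (d2 R').-1 else d2) d1 (enum Kr)
     else d1) d (enum Ks).

Definition delta0 (R : {set T}) : nat := #|[set S in Ks | R \subset S]|.

(* o = processing order (o = [:: R_1; R_2; ...], 0-indexed here);
   delta o i = the delta function at "time i", i.e. at the beginning of the
   iteration processing nth set0 o i (after processing take i o) *)
Fixpoint delta (o : seq {set T}) (i : nat) : {set T} -> nat :=
  match i with
  | 0 => delta0
  | i'.+1 => step (take i' o) (delta o i') (nth set0 o i')
  end.

Definition kappa (o : seq {set T}) (i : nat) : nat :=
  delta o i (nth set0 o i).

(* o is the processing order of a legal run of set-k (ties arbitrary) *)
Definition valid_run (o : seq {set T}) : Prop :=
  perm_eq o (enum Kr) /\
  (forall i j, i <= j < size o ->
     delta o i (nth set0 o i) <= delta o i (nth set0 o j)).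

Definition transition_time (o : seq {set T}) (k i : nat) : Prop :=
  i < size o /\ kappa o i = k /\ (i = 0 \/ kappa o i.-1 < k).

Definition St (o : seq {set T}) (i : nat) : {set {set T}} :=
  [set S in Ks | unproc_Ks (take i o) S].

Definition snodes (o : seq {set T}) (i : nat) : {set {set T}} := KrOf (St o i).

(* R and R' are joined by (at least one) link of G_t *)
Definition slink (o : seq {set T}) (i : nat) : rel {set T} :=
  fun R R' => (R \in snodes o i) && (R' \in snodes o i) && (R != R') &&
    [exists S in St o i, (R \subset S) && (R' \subset S)].

(* C is (the node set of) a connected component of G_t *)
Definition is_component (o : seq {set T}) (i : nat) (C : {set {set T}}) : Prop :=
  exists2 R, R \in snodes o i & C = [set R' | connect (slink o i) R R'].

Definition links_of (o : seq {set T}) (i : nat) (C : {set {set T}})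
  : {set {set T}} :=
  [set S in St o i | [exists R in C, exists R' in C,
      [&& R != R', R \in Kr, R' \in Kr, R \subset S & R' \subset S]]].

End Nuclei.

From mathcomp Require Import all_boot zify.
Set Implicit Arguments. Unset Strict Implicit. Unset Printing Implicit Defensive.

(* The run of set-k satisfies the invariant that, at time p, every unprocessed
   K_r R has delta(R) = max(deg_{S_p}(R), kappa(R_{p-1})).  At the transition
   time t_k this gives that every node of G_{t_k} has S_{t_k}-degree at least k,
   while the peeling order forces every set of K_s's of minimum degree at least
   k to lie inside S_{t_k}: the first processed K_r of such a set would have
   kappa < k.  A nucleus is therefore a connected family of K_s's in S_{t_k},
   i.e. contained in L(C) for a component C; conversely each L(C) has all the
   nucleus properties, so maximality makes the two notions coincide. *)

Section Cliques.
Variables (T : finType) (e : rel T).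

Lemma clique_sub (A B : {set T}) : A \subset B -> clique e B -> clique e A.
Proof.
move=> AB /forall_inP cB; apply/forall_inP => x xA; apply/forall_inP => y yA.
exact: (forall_inP (cB x (subsetP AB x xA)) y (subsetP AB y yA)).
Qed.

Lemma Ks_sub_Kr (r s : nat) (S : {set T}) : r <= s -> S \in Ks e s ->
  exists2 R, R \in Kr e r & R \subset S.
Proof.
rewrite inE => le_rs /andP[cS /eqP cardS].
have sub_take : [set x in take r (enum S)] \subset S.
  by apply/subsetP => x; rewrite inE => /mem_take; rewrite mem_enum.
exists [set x in take r (enum S)] => //.
rewrite inE (clique_sub sub_take cS) /=.
have -> : #|[set x in take r (enum S)]| = #|take r (enum S)|.
  by apply: eq_card => x; rewrite inE.
have /card_uniqP -> := take_uniq r (enum_uniq (mem S)).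
by rewrite size_takel // -cardE cardS.
Qed.

Lemma Ks_sub_other_Kr (r s : nat) (S R : {set T}) : 0 < r -> r < s ->
  S \in Ks e s -> R \in Kr e r -> R \subset S ->
  exists2 R', R' \in Kr e r & (R' \subset S) && (R' != R).
Proof.
rewrite !inE => r_pos r_lt_s /andP[cS /eqP cardS] /andP[_ /eqP cardR] RS.
have /card_gt0P[x] : 0 < #|S :\: R| by rewrite cardsD (setIidPr RS); lia.
rewrite inE => /andP[xR xS].
have /card_gt0P[y yR] : 0 < #|R| by lia.
have sub : x |: (R :\ y) \subset S.
  by rewrite subUset sub1set xS (subset_trans (subsetDl R [set y]) RS).
exists (x |: (R :\ y)).
  rewrite inE (clique_sub sub cS) /= cardsU1 !inE negb_and (negbTE xR) orbT /=.
  by rewrite (cardsD1 y R) yR in cardR; apply/eqP; lia.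
by rewrite sub /=; apply: contraNneq xR => <-; rewrite !inE eqxx.
Qed.

End Cliques.

Lemma count_enum_set (U : finType) (A : {set U}) (q : pred U) :
  count q (enum A) = #|[set x in A | q x]|.
Proof.
rewrite cardE -size_filter; apply: perm_size; apply: uniq_perm.
- exact/filter_uniq/enum_uniq.
- exact: enum_uniq.
by move=> x; rewrite mem_filter !mem_enum inE andbC.
Qed.

Section StepEvaluation.
Variables (T : finType) (e : rel T) (r s : nat).

Definition decr_step (S R : {set T}) (d : {set T} -> nat) (R' : {set T}) :=
  if (R' \subset S) && (R' != R) && (d R < d R') then upd d R' (d R').-1 else d.

Definition peel_step (P : seq {set T}) (R : {set T}) (d : {set T} -> nat)
    (S : {set T}) :=
  if (R \subset S) && unproc_Ks e r P S then foldl (decr_step S R) d (enum (Kr e r))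
  else d.

Lemma foldl_decr_step S R (l : seq {set T}) : uniq l ->
  forall (d : {set T} -> nat) y, foldl (decr_step S R) d l y =
    if [&& y \in l, y \subset S, y != R & d R < d y] then (d y).-1 else d y.
Proof.
elim: l => [|x l IH] //= /andP[xl ul] d y; rewrite IH // in_cons.
have -> : decr_step S R d x R = d R.
  rewrite /decr_step; case: ifP => // /andP[/andP[_ xR] _].
  by rewrite /upd eq_sym (negbTE xR).
have [->|yx] := eqVneq y x.
  by rewrite (negbTE xl) /decr_step -andbA; case: ifP => // _; rewrite /upd eqxx.
suff -> : decr_step S R d x y = d y by [].
by rewrite /decr_step; case: ifP => // _; rewrite /upd (negbTE yx).
Qed.

Lemma foldl_peel_step (P : seq {set T}) (R R' : {set T}) (l : seq {set T}) :
  R' \in Kr e r -> R' != R -> forall d : {set T} -> nat, d R <= d R' ->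
  foldl (peel_step P R) d l R = d R /\
  foldl (peel_step P R) d l R' =
    maxn (d R' - count (fun S : {set T} =>
                          [&& R \subset S, unproc_Ks e r P S & R' \subset S]) l)
         (d R).
Proof.
move=> R'K R'R; elim: l => [|S l IH] d le_dR /=; first by split => //; lia.
have fixR : peel_step P R d S R = d R.
  rewrite /peel_step; case: ifP => // _.
  by rewrite foldl_decr_step ?enum_uniq // eqxx !andbF.
have stepR' : peel_step P R d S R' =
    if [&& R \subset S, unproc_Ks e r P S, R' \subset S & d R < d R']
    then (d R').-1 else d R'.
  rewrite /peel_step; case: (R \subset S); case: (unproc_Ks e r P S) => //=.
  by rewrite foldl_decr_step ?enum_uniq // mem_enum R'K R'R.
have [-> ->] := IH (peel_step P R d S) ltac:(rewrite fixR stepR'; case: ifP; lia).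
rewrite fixR stepR'; split => //.
case: (R \subset S); case: (unproc_Ks e r P S); case: (R' \subset S) => /=;
  try lia; case: ltnP => /= lt_dR; lia.
Qed.

Lemma step_eval P d (R R' : {set T}) : R' \in Kr e r -> R' != R -> d R <= d R' ->
  step e r s P d R R' =
  maxn (d R' - #|[set S in Ks e s | [&& R \subset S, unproc_Ks e r P S & R' \subset S]]|)
       (d R).
Proof.
move=> R'K R'R le_dR; rewrite -count_enum_set.
by have [_ <-] := foldl_peel_step P (enum (Ks e s)) R'K R'R le_dR.
Qed.

End StepEvaluation.

(* One peeling step: of the n K_s's through R', a also contain R; delta(R') =
   max(n, P) loses a but is floored at delta(R) = max(x, P) >= P. *)
Lemma maxn_subn_split x P n a b : maxn x P <= maxn n P -> a + b = n ->
  maxn (maxn n P - a) (maxn x P) = maxn b (maxn x P).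
Proof. lia. Qed.

Lemma unproc_Ks_rcons (T : finType) (e : rel T) (r : nat) P (x S : {set T}) :
  x \in Kr e r -> unproc_Ks e r (rcons P x) S = unproc_Ks e r P S && ~~ (x \subset S).
Proof.
move=> xK; apply/forall_inP/andP => [unprocS|[/forall_inP unprocS xS] R0 R0K].
  split.
    apply/forall_inP => R0 R0K; apply/implyP => R0S.
    by move: (implyP (unprocS R0 R0K) R0S); rewrite mem_rcons in_cons negb_or => /andP[].
  by apply/negP => xS; move: (implyP (unprocS x xK) xS); rewrite mem_rcons mem_head.
apply/implyP => R0S; rewrite mem_rcons in_cons negb_or (implyP (unprocS R0 R0K) R0S).
by rewrite andbT; apply: contraNneq xS => <-.
Qed.

Lemma KrOf_sub_Kr (T : finType) (e : rel T) (r : nat) SS (R : {set T}) :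
  R \in KrOf e r SS -> R \in Kr e r.
Proof. by rewrite inE => /andP[]. Qed.

Lemma KrOf_mono (T : finType) (e : rel T) (r : nat) (A B : {set {set T}}) :
  A \subset B -> KrOf e r A \subset KrOf e r B.
Proof.
move=> AB; apply/subsetP => R; rewrite !inE => /andP[-> /exists_inP[S SA RS]].
by apply/exists_inP; exists S => //; apply: (subsetP AB).
Qed.

Section Run.
Variables (T : finType) (e : rel T) (r s : nat).
Hypotheses (r_pos : 0 < r) (r_lt_s : r < s).
Variable o : seq {set T}.
Hypothesis Ho : valid_run e r s o.

Local Notation KR := (Kr e r).
Local Notation KS := (Ks e s).
Local Notation St := (St e r s o).

Lemma mem_run x : (x \in o) = (x \in KR).
Proof. by rewrite (perm_mem Ho.1) mem_enum. Qed.

Lemma uniq_run : uniq o.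
Proof. by rewrite (perm_uniq Ho.1) enum_uniq. Qed.

Lemma nth_run_Kr p : p < size o -> nth set0 o p \in KR.
Proof. by move=> lt_p; rewrite -mem_run mem_nth. Qed.

Lemma nth_run_notin_take p : p < size o -> nth set0 o p \notin take p o.
Proof. by move=> lt_p; rewrite in_take ?mem_nth // index_uniq ?uniq_run // ltnn. Qed.

Lemma unprocessed_index p R : R \in KR -> R \notin take p o ->
  [/\ p <= index R o, index R o < size o & nth set0 o (index R o) = R].
Proof.
by rewrite -mem_run => Ro; rewrite in_take // -leqNgt; split; rewrite ?index_mem ?nth_index.
Qed.

Lemma St0 : St 0 = KS.
Proof.
apply/setP => S; rewrite inE /unproc_Ks take0; case: (S \in KS) => //=.
by apply/forall_inP => ? _; rewrite implybT.
Qed.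

Lemma St_sub_Ks p : St p \subset KS.
Proof. by apply/subsetP => S; rewrite inE => /andP[]. Qed.

Lemma St_succ p : p < size o ->
  St p.+1 = [set S in St p | ~~ (nth set0 o p \subset S)].
Proof.
move=> lt_p; apply/setP => S.
by rewrite !inE (take_nth set0 lt_p) unproc_Ks_rcons ?nth_run_Kr // andbA.
Qed.

Definition prev_kappa p := if p is p'.+1 then kappa e r s o p' else 0.

Lemma delta_unprocessed p : p <= size o -> forall R', R' \in KR ->
  R' \notin take p o -> delta e r s o p R' = maxn (sdeg (St p) R') (prev_kappa p).
Proof.
elim: p => [|p IH] lt_p R' R'K R'n; first by rewrite /= /delta0 St0 maxn0.
set R := nth set0 o p.
move: R'n; rewrite (take_nth set0 lt_p) mem_rcons in_cons negb_or => /andP[R'R R'n].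
have RK := nth_run_Kr lt_p; have Rn := nth_run_notin_take lt_p.
have [lt_pi lt_i nth_i] := unprocessed_index R'K R'n.
have le_dR : delta e r s o p R <= delta e r s o p R'.
  by rewrite -nth_i; apply: Ho.2; rewrite lt_pi lt_i.
rewrite /= -/R step_eval // /kappa -/R !IH ?(ltnW lt_p) //.
set A := [set S in St p | R' \subset S].
set B : {set {set T}} := finset (fun S : {set T} => R \subset S).
have removed : [set S in KS | [&& R \subset S, unproc_Ks e r (take p o) S & R' \subset S]]
    = A :&: B.
  apply/setP => S; rewrite !inE.
  by case: (clique e S) (#|S| == s) (R \subset S) (R' \subset S)
    (unproc_Ks e r (take p o) S) => [] [] [] [] [].
have kept : sdeg (St p.+1) R' = #|A :\: B|.
  apply: eq_card => S; rewrite St_succ // !inE -/R.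
  by case: (clique e S) (#|S| == s) (R \subset S) (R' \subset S)
    (unproc_Ks e r (take p o) S) => [] [] [] [] [].
have degA : sdeg (St p) R' = #|A| by [].
rewrite !IH ?(ltnW lt_p) // degA in le_dR.
rewrite removed kept degA.
exact: maxn_subn_split le_dR (cardsID B A).
Qed.

Lemma kappa_unprocessed p : p < size o ->
  kappa e r s o p = maxn (sdeg (St p) (nth set0 o p)) (prev_kappa p).
Proof.
by move=> lt_p; rewrite /kappa (delta_unprocessed (ltnW lt_p)) ?nth_run_Kr ?nth_run_notin_take.
Qed.

Lemma prev_kappa_mono p q : p <= q -> q <= size o -> prev_kappa p <= prev_kappa q.
Proof.
move=> le_pq; elim: q le_pq => [|q IH]; first by rewrite leqn0 => /eqP ->.
rewrite leq_eqVlt => /orP[/eqP -> //| lt_pq] lt_q.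
apply: leq_trans (IH lt_pq (ltnW lt_q)) _.
by rewrite [prev_kappa q.+1]kappa_unprocessed // leq_maxr.
Qed.

Lemma KrOf_of_Ks (SS : {set {set T}}) S : S \in SS -> S \in KS ->
  exists2 R, R \in KrOf e r SS & R \subset S.
Proof.
move=> SSS SK; have [R RK RS] := Ks_sub_Kr (ltnW r_lt_s) SK.
by exists R => //; rewrite inE RK; apply/exists_inP; exists S.
Qed.

Local Notation slk i := (slink e r s o i).

Lemma mem_snodes i (S R : {set T}) : S \in St i -> R \in KR -> R \subset S ->
  R \in snodes e r s o i.
Proof. by move=> Si RK RS; rewrite inE RK; apply/exists_inP; exists S. Qed.

Lemma snodes_unprocessed i R : R \in snodes e r s o i -> R \in KR /\ R \notin take i o.
Proof.
rewrite inE => /andP[RK /exists_inP[S Si RS]]; split => //.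
by move: Si; rewrite inE => /andP[_ /forall_inP unprocS]; exact: (implyP (unprocS R RK) RS).
Qed.

Lemma slink_sym i : symmetric (slk i).
Proof.
suff slinkC x y : slk i x y -> slk i y x by move=> x y; apply/idP/idP; apply: slinkC.
case/andP=> /andP[/andP[xn yn] xy] /exists_inP[S Si /andP[xS yS]].
by rewrite /slink yn xn eq_sym xy; apply/exists_inP; exists S; rewrite ?yS ?xS.
Qed.

Definition scomp i (R0 : {set T}) : {set {set T}} := [set R | connect (slk i) R0 R].

Local Notation links i R0 := (links_of e r s o i (scomp i R0)).

Lemma scomp_trans i R0 R R' : R \in scomp i R0 -> slk i R R' -> R' \in scomp i R0.
Proof. by rewrite !inE => R0R RR'; apply: connect_trans R0R (connect1 RR'). Qed.

Lemma slink_of i (S R R' : {set T}) : S \in St i -> R \in KR -> R' \in KR ->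
  R \subset S -> R' \subset S -> R != R' -> slk i R R'.
Proof.
move=> Si RK R'K RS R'S RR'.
rewrite /slink (mem_snodes Si RK RS) (mem_snodes Si R'K R'S) RR'.
by apply/exists_inP; exists S; rewrite ?RS.
Qed.

Lemma mem_links i (R0 S R : {set T}) : S \in St i -> R \in scomp i R0 ->
  R \in KR -> R \subset S -> S \in links i R0.
Proof.
move=> Si R0R RK RS.
have [R' R'K /andP[R'S R'R]] :=
  Ks_sub_other_Kr r_pos r_lt_s (subsetP (St_sub_Ks i) S Si) RK RS.
have RR' : slk i R R' by apply: slink_of Si RK R'K RS R'S _; rewrite eq_sym.
rewrite inE Si; apply/exists_inP; exists R => //.
apply/exists_inP; exists R'; first exact: scomp_trans RR'.
by rewrite eq_sym R'R RK R'K RS R'S.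
Qed.

Lemma links_sub_St i R0 : links i R0 \subset St i.
Proof. by apply/subsetP => S; rewrite inE => /andP[]. Qed.

Lemma KrOf_links i R0 R : R \in KrOf e r (links i R0) -> R \in scomp i R0.
Proof.
rewrite inE => /andP[RK /exists_inP[S]].
rewrite inE => /andP[Si /exists_inP[R1 R0R1 /exists_inP[R2 _ /and5P[_ R1K _ R1S _]]]] RS.
have [<- //|R1R] := eqVneq R1 R.
exact: scomp_trans R0R1 (slink_of Si R1K RK R1S RS R1R).
Qed.

Lemma snodes_KrOf_links i R0 : R0 \in snodes e r s o i -> R0 \in KrOf e r (links i R0).
Proof.
rewrite inE => /andP[R0K /exists_inP[S Si R0S]].
rewrite inE R0K; apply/exists_inP; exists S => //.
by apply: mem_links Si _ R0K R0S; rewrite inE.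
Qed.

Lemma connect_slink_sadj i R0 R R' : R \in scomp i R0 ->
  connect (slk i) R R' -> connect (sadj e r (links i R0)) R R'.
Proof.
move=> R0R /connectP[p pathRp ->]; elim: p R R0R pathRp => [|R1 p IH] R R0R //=.
case/andP=> RR1 pathR1; have R0R1 := scomp_trans R0R RR1.
apply: connect_trans (connect1 _) (IH R1 R0R1 pathR1).
case/andP: RR1 => /andP[/andP[Rn R1n] _] /exists_inP[S Si /andP[RS R1S]].
have [RK _] := snodes_unprocessed Rn; have [R1K _] := snodes_unprocessed R1n.
have SL := mem_links Si R0R RK RS.
have KrOfL Q : Q \in KR -> Q \subset S -> Q \in KrOf e r (links i R0).
  by move=> QK QS; rewrite inE QK; apply/exists_inP; exists S.
rewrite /sadj /= !KrOfL //; apply/exists_inP; exists S; first exact: SL.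
by rewrite subUset RS R1S.
Qed.

Lemma connect_sadj_slink i (SS : {set {set T}}) R R' : SS \subset St i ->
  connect (sadj e r SS) R R' -> connect (slk i) R R'.
Proof.
move=> SSi; apply: connect_sub R R' => R R' /andP[/andP[RSS R'SS] /exists_inP[S SSS]].
rewrite subUset => /andP[RS R'S].
have [-> | RR'] := eqVneq R R'; first exact: connect0.
have RK := KrOf_sub_Kr RSS; have R'K := KrOf_sub_Kr R'SS.
exact: connect1 (slink_of (subsetP SSi S SSS) RK R'K RS R'S RR').
Qed.

Variables (k t : nat).
Hypotheses (k_pos : 0 < k) (Ht : transition_time e r s o k t).

Lemma transition_lt_size : t < size o.
Proof. by case: Ht. Qed.

Lemma prev_kappa_transition : prev_kappa t < k.
Proof. by case: Ht => _ [_ [-> | ]] //; case: t. Qed.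

Lemma kappa_lt_transition p : p < t -> kappa e r s o p < k.
Proof.
move=> lt_pt; apply: leq_ltn_trans prev_kappa_transition.
exact: (prev_kappa_mono lt_pt (ltnW transition_lt_size)).
Qed.

Lemma sdeg_unprocessed_ge R : R \in KR -> R \notin take t o -> k <= sdeg (St t) R.
Proof.
move=> RK Rn; have [le_t lt_i nth_i] := unprocessed_index RK Rn.
have := Ho.2 t (index R o); rewrite le_t lt_i nth_i => /(_ isT).
rewrite (delta_unprocessed (ltnW transition_lt_size) RK Rn).
case: Ht => _ [kappa_t _]; move: kappa_t; rewrite /kappa => ->.
by rewrite leq_max [k <= prev_kappa t]leqNgt prev_kappa_transition orbF.
Qed.

Lemma transition_node_snodes : nth set0 o t \in snodes e r s o t.
Proof.
have Rt := nth_run_Kr transition_lt_size.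
have /card_gt0P[S] : 0 < sdeg (St t) (nth set0 o t).
  exact: leq_trans k_pos (sdeg_unprocessed_ge Rt (nth_run_notin_take transition_lt_size)).
by rewrite inE => /andP[Si RtS]; apply: mem_snodes Si Rt RtS.
Qed.

(* Peeling: the first processed K_r inside a member of SS has kappa < k but
   delta >= its SS-degree >= k. *)
Lemma sub_St_transition (SS : {set {set T}}) : SS \subset KS ->
  (forall R, R \in KrOf e r SS -> k <= sdeg SS R) -> SS \subset St t.
Proof.
move=> SSK SSdeg; suff SSp p : p <= t -> SS \subset St p by apply: SSp.
elim: p => [|p IH] le_pt; first by rewrite St0.
have lt_p : p < size o := leq_trans le_pt (ltnW transition_lt_size).
have SSp := IH (ltnW le_pt).
rewrite St_succ //; apply/subsetP => S SSS; rewrite inE (subsetP SSp S SSS) /=.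
apply/negP => RpS; set Rp := nth set0 o p in RpS.
have RpSS : Rp \in KrOf e r SS.
  by rewrite inE nth_run_Kr //; apply/exists_inP; exists S.
have le_sdeg : sdeg SS Rp <= sdeg (St p) Rp.
  apply/subset_leq_card/subsetP => S'; rewrite inE => /andP[S'SS RpS'].
  by rewrite inE (subsetP SSp S' S'SS).
have := kappa_lt_transition le_pt; rewrite kappa_unprocessed // -/Rp.
rewrite gtn_max => /andP[lt_deg _].
by have := leq_trans (SSdeg Rp RpSS) le_sdeg; rewrite leqNgt lt_deg.
Qed.

Lemma links_nucleus_prop R0 : nucleus_prop e r s k (links t R0).
Proof.
split; first exact: subset_trans (links_sub_St t R0) (St_sub_Ks t).
split.
  move=> R RL; have R0R := KrOf_links RL.
  have [RK Rn] := snodes_unprocessed (subsetP (KrOf_mono e r (links_sub_St t R0)) R RL).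
  apply: leq_trans (sdeg_unprocessed_ge RK Rn) _.
  apply/subset_leq_card/subsetP => S; rewrite inE => /andP[Si RS].
  by rewrite inE RS (mem_links Si R0R RK RS).
move=> R R' RL R'L; apply: connect_slink_sadj (KrOf_links RL) _.
have := KrOf_links RL; have := KrOf_links R'L; rewrite !inE => R0R' R0R.
by apply: connect_trans R0R'; rewrite (sym_connect_sym (@slink_sym t)).
Qed.

Lemma nucleus_prop_sub_links (SS : {set {set T}}) R0 : nucleus_prop e r s k SS ->
  R0 \in KrOf e r SS -> SS \subset links t R0.
Proof.
case=> SSK [SSdeg SSconn] R0SS; have SSt := sub_St_transition SSK SSdeg.
apply/subsetP => S SSS; have [R RSS RS] := KrOf_of_Ks SSS (subsetP SSK S SSS).
apply: mem_links (subsetP SSt S SSS) _ (KrOf_sub_Kr RSS) RS.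
by rewrite inE (connect_sadj_slink SSt (SSconn R0 R R0SS RSS)).
Qed.

(* Maximality excludes the empty nucleus, since L(C) is a nonempty candidate. *)
Lemma nucleus_KrOf_nonempty (SS : {set {set T}}) : is_nucleus e r s k SS ->
  exists R0, R0 \in KrOf e r SS.
Proof.
case=> [[SSK _] SSmax]; have [SS0 | [S SSS]] := set_0Vmem SS; last first.
  by have [R0 R0SS _] := KrOf_of_Ks SSS (subsetP SSK S SSS); exists R0.
have := snodes_KrOf_links transition_node_snodes.
rewrite (SSmax _ _ (links_nucleus_prop _)) ?SS0 ?sub0set // inE.
by case/andP=> _ /exists_inP[S]; rewrite inE.
Qed.

End Run.

Theorem lemma2 (T : finType) (e : rel T)
  (e_sym : symmetric e) (e_irr : irreflexive e)
  (r s : nat) (r_pos : 0 < r) (r_lt_s : r < s)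
  (o : seq {set T}) (Ho : valid_run e r s o)
  (k : nat) (k_pos : 0 < k) (i : nat) (Hi : transition_time e r s o k i) :
  forall SS : {set {set T}},
    is_nucleus e r s k SS <->
    exists2 C, is_component e r s o i C & SS = links_of e r s o i C.
Proof.
have links_prop := links_nucleus_prop r_pos r_lt_s Ho k_pos Hi.
have sub_links := nucleus_prop_sub_links r_pos r_lt_s Ho k_pos Hi.
move=> SS; split.
  move=> SSnuc; have [[SSK [SSdeg _]] SSmax] := SSnuc.
  have [R0 R0SS] := nucleus_KrOf_nonempty r_pos r_lt_s Ho k_pos Hi SSnuc.
  have SSi := sub_St_transition Ho k_pos Hi SSK SSdeg.
  exists (scomp e r s o i R0); first by exists R0; rewrite // (subsetP (KrOf_mono e r SSi)).
  by apply/esym/SSmax; [exact: sub_links SSnuc.1 R0SS | exact: links_prop].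
case=> _ [R0 R0i ->] ->; split; first exact: links_prop.
move=> SS' linksSS' SS'prop; apply/eqP; rewrite eqEsubset linksSS' andbT.
apply: sub_links SS'prop _.
exact: subsetP (KrOf_mono e r linksSS') R0 (snodes_KrOf_links r_pos r_lt_s R0i).
Qed.
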